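(* Under the first-order dynamical system $$\dot{x}^{(1)}_k=2\lambda(x_{k-1}+s^{*}_{k-1})x^{(1)}_{k-1}-2\lambda(x_k+s^{*}_k)x^{(1)}_k-x^{(1)}_k+x^{(1)}_{k+1},\qquad 1\le k\le b,$$ with $x^{(1)}_0=x^{(1)}_{b+1}\equiv 0$ and initial condition $x^{(1)}(0)=N(z-y)$, we have for all $t\ge 0$ $$|x^{(1)}(t)|\le |x^{(1)}(0)|=1.$$
   Context: Setting: a system of $N$ servers, each with buffer size $b=O(\log N)$, Poisson arrivals of rate $\lambda N$ with $\lambda=1-\gamma/N^{\alpha}$ ($0<\gamma\le 1$, $\alpha>0$), i.i.d. exponential service times of rate one, and the power-of-two-choices dispatching rule. $s_k$ is the fraction of servers with at least $k$ jobs ($s_0=1$, $s_{b+1}=0$), and $s^{*}=(s^*_1,\dots,s^*_b)$ is the unique equilibrium of the mean-field model $\dot s_k=\lambda(s_{k-1}^2-s_k^2)-(s_k-s_{k+1})$ for $1\le k\le b-1$, $\dot s_b=\lambda(s_{b-1}^2-s_b^2)-s_b$. Let $x=s-s^{*}$ and let $x(t)$ denote the trajectory of the centered mean-field dynamics $\dot x=f(x)$ (the mean-field model written in the variable $x=s-s^*$), so that $s_k(t)=x_k(t)+s^*_k\ge 0$ for all $t\ge 0$ and all $k$. The system for $x^{(1)}$ in the claim is the linearization (first-order/variational system) of these dynamics along the trajectory $x(t)$. Here $z,y$ are states such that the transition rate from $z$ to $y$ is nonzero, so $z-y$ has exactly one nonzero entry equal to $\pm 1/N$, hence $x^{(1)}(0)=N(z-y)$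 has a single entry $\pm1$. Throughout, $|v|=\sum_{k=1}^b|v_k|$ denotes the 1-norm. *)

From Stdlib Require Import Reals Lra.
From Coquelicot Require Import Coquelicot.
Open Scope R_scope.

(* Vectors (x_1, ..., x_b) are represented as functions nat -> R; only the
   indices 1..b are meaningful. *)

(* Extension by zero outside 1..b : enforces x^{(1)}_0 = x^{(1)}_{b+1} = 0. *)
Definition ext (b : nat) (v : nat -> R) (k : nat) : R :=
  if andb (Nat.leb 1 k) (Nat.leb k b) then v k else 0.

Definition sfull (b : nat) (v : nat -> R) (k : nat) : R :=
  if Nat.eqb k 0 then 1 else ext b v k.

Definition mf_field (b : nat) (lam : R) (s : nat -> R) (k : nat) : R :=
  if Nat.ltb k b
  then lam * (s (k - 1)%nat ^ 2 - s k ^ 2) - (s k - s (k + 1)%nat)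
  else lam * (s (k - 1)%nat ^ 2 - s k ^ 2) - s k.

Definition is_equilibrium (b : nat) (lam : R) (s : nat -> R) : Prop :=
  forall k : nat, (1 <= k <= b)%nat -> mf_field b lam (sfull b s) k = 0.

Definition in_state_space (b : nat) (s : nat -> R) : Prop :=
  (forall k : nat, (1 <= k <= b)%nat -> 0 <= s k <= 1) /\
  (forall k : nat, (1 <= k < b)%nat -> s (S k) <= s k).

Fixpoint norm1 (b : nat) (v : nat -> R) : R :=
  match b with
  | O => 0
  | S n => norm1 n v + Rabs (v (S n))
  end.

(* Right-hand side of the first-order (variational) system at index k,
   given the current value x (of the centered mean-field trajectory) and
   the current value y of x^{(1)}. *)
Definition var_field (b : nat) (lam : R) (sstar x y : nat -> R) (k : nat) : R :=
  let S := sfull b (fun j => x j + sstar j) in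
  let Y := ext b y in
  2 * lam * S (k - 1)%nat * Y (k - 1)%nat - 2 * lam * S k * Y k
  - Y k + Y (k + 1)%nat.

(* The variational system reads x1' = A(t) x1, where the off-diagonal entries of A(t)
   (2 lam s_(k-1) and 1) are nonnegative because lam >= 0 and s = x + s* >= 0, and every
   column of A(t) sums to 0, except the first and last ones whose sums are negative. So for
   small h > 0 the Euler step I + h A(t) has nonnegative entries and column sums at most 1,
   hence does not increase the 1-norm. The upper right Dini derivative of t |-> |x1(t)| is
   therefore nonpositive, and a continuous function with this property is nonincreasing. *)

From Stdlib Require Import Reals Lra Lia Classical.
From Coquelicot Require Import Coquelicot.
Open Scope R_scope.

Lemma one_sub_div_Rpower_nonneg (N : nat) (gamma alpha : R) :
  (1 <= N)%nat -> 0 < gamma <= 1 -> 0 < alpha ->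
  0 <= 1 - gamma / Rpower (INR N) alpha.
Proof.
  intros HN Hgamma Halpha.
  assert (HN1 : 1 <= INR N) by (apply (le_INR 1); exact HN).
  assert (Hpow : 1 <= Rpower (INR N) alpha).
  { rewrite <- (Rpower_O (INR N)) by lra. apply Rle_Rpower; lra. }
  assert (gamma / Rpower (INR N) alpha <= 1) by (apply Rle_div_l; lra).
  lra.
Qed.

Lemma norm1_sum_n_m (n : nat) (v : nat -> R) :
  norm1 n v = sum_n_m (fun k => Rabs (v k)) 1 n.
Proof.
  induction n as [|n IH]; simpl norm1.
  - rewrite sum_n_m_zero by lia. reflexivity.
  - now rewrite sum_n_Sm, IH by lia.
Qed.

Lemma sum_n_m_telescope (u : nat -> R) (n : nat) :
  sum_n_m (fun k => u (k + 1)%nat - u k) 1 n = u (n + 1)%nat - u 1%nat.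
Proof.
  induction n as [|n IH].
  - rewrite sum_n_m_zero by lia. simpl. change (@zero R_AbelianMonoid) with 0. ring.
  - rewrite sum_n_Sm, IH by lia. replace (S n) with (n + 1)%nat by lia.
    unfold plus; simpl. ring.
Qed.

Lemma sum_n_m_telescope_pred (u : nat -> R) (n : nat) :
  sum_n_m (fun k => u (k - 1)%nat - u k) 1 n = u 0%nat - u n.
Proof.
  induction n as [|n IH].
  - rewrite sum_n_m_zero by lia. simpl. change (@zero R_AbelianMonoid) with 0. ring.
  - rewrite sum_n_Sm, IH by lia. replace (S n - 1)%nat with n by lia.
    unfold plus; simpl. ring.
Qed.

Lemma norm1_ext_eq (n : nat) (v w : nat -> R) :
  (forall k, (1 <= k <= n)%nat -> v k = w k) -> norm1 n v = norm1 n w.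
Proof.
  induction n as [|n IH]; intros Hvw; simpl; [reflexivity|].
  rewrite (Hvw (S n)), IH by (lia || (intros; apply Hvw; lia)); reflexivity.
Qed.

Lemma norm1_indicator (n j : nat) (e : R) : (1 <= j)%nat ->
  norm1 n (fun k => if Nat.eqb k j then e else 0) = if Nat.leb j n then Rabs e else 0.
Proof.
  intros Hj. induction n as [|n IH]; cbn [norm1].
  - destruct j; [lia|reflexivity].
  - rewrite IH.
    destruct (Nat.eqb_spec (S n) j), (Nat.leb_spec j n), (Nat.leb_spec j (S n)); try lia;
      rewrite ?Rabs_R0; ring.
Qed.

Lemma norm1_le_sum_n_m (n : nat) (v w : nat -> R) :
  (forall k, (1 <= k <= n)%nat -> Rabs (v k) <= w k) ->
  norm1 n v <= sum_n_m w 1 n.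
Proof.
  intros Hvw. rewrite norm1_sum_n_m.
  induction n as [|n IH].
  - rewrite !sum_n_m_zero by lia. apply Rle_refl.
  - rewrite !sum_n_Sm by lia. apply Rplus_le_compat; [apply IH; intros; apply Hvw|apply Hvw]; lia.
Qed.

Lemma norm1_le_of_dist_le (n : nat) (v w : nat -> R) (d : R) :
  (forall k, (1 <= k <= n)%nat -> Rabs (v k - w k) <= d) ->
  norm1 n v <= norm1 n w + INR n * d.
Proof.
  intros Hvw.
  eapply Rle_trans.
  { apply (norm1_le_sum_n_m _ _ (fun k => plus (Rabs (w k)) d)).
    intros k Hk. specialize (Hvw k Hk). revert Hvw.
    unfold plus; simpl. split_Rabs; lra. }
  rewrite sum_n_m_plus, sum_n_m_const, <- norm1_sum_n_m, Nat.sub_1_r.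
  apply Rle_refl.
Qed.

Lemma norm1_euler_step_le (n : nat) (a Y : nat -> R) (h : R) :
  Y 0%nat = 0 -> Y (n + 1)%nat = 0 -> (forall k, 0 <= a k) -> 0 <= h ->
  (forall k, (1 <= k <= n)%nat -> h * (a k + 1) <= 1) ->
  norm1 n (fun k => Y k + h * (a (k - 1)%nat * Y (k - 1)%nat - a k * Y k - Y k + Y (k + 1)%nat))
  <= norm1 n Y.
Proof.
  intros HY0 HYn Ha Hh Hstep.
  set (phi := fun j => a j * Rabs (Y j)).
  set (psi := fun j => Rabs (Y j)).
  eapply Rle_trans.
  { apply (norm1_le_sum_n_m _ _
      (fun k => plus (psi k) (plus (h * (phi (k - 1)%nat - phi k)) (h * (psi (k + 1)%nat - psi k))))).
    intros k Hk.
    assert (Hk1 : 0 <= 1 - h * a k - h) by (specialize (Hstep k Hk); lra).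
    replace (Y k + h * (a (k - 1)%nat * Y (k - 1)%nat - a k * Y k - Y k + Y (k + 1)%nat))
      with ((1 - h * a k - h) * Y k + (h * a (k - 1)%nat) * Y (k - 1)%nat + h * Y (k + 1)%nat)
      by ring.
    eapply Rle_trans; [apply Rabs_triang|].
    eapply Rle_trans; [apply Rplus_le_compat_r, Rabs_triang|].
    rewrite !Rabs_mult, (Rabs_pos_eq (1 - h * a k - h)), (Rabs_pos_eq h), (Rabs_pos_eq (a _))
      by auto.
    unfold phi, psi, plus; simpl. lra. }
  rewrite !sum_n_m_plus, !(sum_n_m_mult_l h), sum_n_m_telescope_pred, sum_n_m_telescope.
  rewrite (norm1_sum_n_m n Y). fold psi.
  unfold phi, psi, plus, mult; simpl. rewrite HY0, HYn, Rabs_R0.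
  assert (0 <= a n * Rabs (Y n)) by (apply Rmult_le_pos; [apply Ha|apply Rabs_pos]).
  assert (0 <= Rabs (Y 1%nat)) by apply Rabs_pos.
  nra.
Qed.

Lemma ball_R (x e y : R) : ball x e y <-> Rabs (y - x) < e.
Proof. reflexivity. Qed.

Lemma at_right_between (x t : R) : x < t -> at_right x (fun s => x < s < t).
Proof.
  intros Hxt. exists (mkposreal (t - x) ltac:(lra)).
  intros s Hs Hxs. rewrite ball_R in Hs. apply Rabs_def2 in Hs. simpl in Hs. lra.
Qed.

Section UpperDiniDerivative.

Variable V : R -> R.
Hypothesis V_cont : forall c, 0 < c -> continuous V c.
Hypothesis V_dini : forall c, 0 < c -> forall e, 0 < e ->
  at_right 0 (fun h => V (c + h) <= V c + e * h).

Lemma dini_growth_le (e t0 t1 : R) :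
  0 < e -> 0 < t0 <= t1 -> V t1 <= V t0 + e * (t1 - t0).
Proof.
  intros He [Ht0 Ht01].
  set (below := fun s => V s <= V t0 + e * (s - t0)).
  set (E := fun s => t0 <= s <= t1 /\ below s).
  (* c = sup E lies in E by continuity, and the Dini bound at c would push E past c,
     so c = t1. *)
  destruct (completeness E) as [c [Hub Hlub]].
  { exists t1. intros s [Hs _]. lra. }
  { exists t0. split; [lra|]. unfold below. lra. }
  assert (Ht0c : t0 <= c) by (apply Hub; split; [lra|unfold below; lra]).
  assert (Hct1 : c <= t1) by (apply Hlub; intros s [Hs _]; lra).
  assert (Hc_below : below c).
  { destruct (Rle_or_lt (V c) (V t0 + e * (c - t0))) as [|Hgap]; [assumption|exfalso].
    set (g := V c - (V t0 + e * (c - t0))).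
    destruct (proj1 (filterlim_locally (F := locally c) V (V c)) (V_cont c ltac:(lra))
                (mkposreal (g / 2) ltac:(unfold g; lra))) as [d Hd].
    assert (Happrox : exists s, E s /\ c - d < s).
    { apply NNPP. intros Hnone.
      assert (c <= c - d) by (apply Hlub; intros s Es; apply Rnot_lt_le; eauto).
      generalize (cond_pos d). lra. }
    destruct Happrox as [s [[Hs Hs_below] Hsd]].
    assert (Hsc : s <= c) by (apply Hub; split; assumption).
    assert (HVs : ball (V c) (g / 2) (V s)) by (apply Hd; rewrite ball_R; apply Rabs_def1; lra).
    rewrite ball_R in HVs. apply Rabs_def2 in HVs. unfold below in Hs_below. simpl in HVs.
    assert (e * (s - t0) <= e * (c - t0)) by (apply Rmult_le_compat_l; lra).
    unfold g in HVs. lra. }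
  destruct (Rle_lt_or_eq_dec c t1 Hct1) as [Hlt|<-]; [exfalso|exact Hc_below].
  assert (Hnear : at_right 0 (fun h => V (c + h) <= V c + e * h /\ 0 < h < t1 - c)).
  { apply filter_and; [apply V_dini|apply at_right_between]; lra. }
  destruct (filter_ex _ Hnear) as [h [Hstep Hh]].
  assert (Hch : c + h <= c).
  { apply Hub. split; [lra|]. unfold below in *.
    replace (e * (c + h - t0)) with (e * (c - t0) + e * h) by ring. lra. }
  lra.
Qed.

Lemma dini_nonincreasing (t0 t1 : R) : 0 < t0 <= t1 -> V t1 <= V t0.
Proof.
  intros Ht. apply Rle_plus_epsilon. intros eps Heps.
  set (e := eps / (t1 - t0 + 1)).
  assert (He : 0 < e) by (apply Rdiv_lt_0_compat; lra).
  assert (Hgap : e * (t1 - t0) <= eps).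
  { replace eps with (e * (t1 - t0 + 1)) by (unfold e; field; lra). nra. }
  generalize (dini_growth_le e t0 t1 He Ht). lra.
Qed.

Hypothesis V_cont0 : filterlim V (at_right 0) (locally (V 0)).

Lemma dini_le_initial (t : R) : 0 <= t -> V t <= V 0.
Proof.
  intros Ht. destruct (Rle_lt_or_eq_dec 0 t Ht) as [Htpos|<-]; [|apply Rle_refl].
  apply Rle_plus_epsilon. intros eps Heps.
  assert (Hnear : at_right 0 (fun s => ball (V 0) eps (V s) /\ 0 < s < t)).
  { apply filter_and; [|now apply at_right_between].
    exact (proj1 (filterlim_locally V (V 0)) V_cont0 (mkposreal eps Heps)). }
  destruct (filter_ex _ Hnear) as [s [Hs Hst]].
  rewrite ball_R in Hs. apply Rabs_def2 in Hs. simpl in Hs.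
  generalize (dini_nonincreasing s t ltac:(lra)). lra.
Qed.

End UpperDiniDerivative.

Lemma filter_forall_range {T : Type} (F : (T -> Prop) -> Prop) {FF : Filter F}
  (n : nat) (P : nat -> T -> Prop) :
  (forall k, (1 <= k <= n)%nat -> F (P k)) ->
  F (fun t => forall k, (1 <= k <= n)%nat -> P k t).
Proof.
  induction n as [|n IH]; intros HP.
  - apply filter_forall. intros t k Hk. lia.
  - apply (filter_imp (fun t => (forall k, (1 <= k <= n)%nat -> P k t) /\ P (S n) t)).
    + intros t [Hle Hlast] k Hk.
      destruct (Nat.eq_dec k (S n)) as [->|Hne]; [exact Hlast|apply Hle; lia].
    + apply filter_and; [apply IH; intros k Hk|]; apply HP; lia.
Qed.

Lemma filterlim_norm1 {T : Type} (F : (T -> Prop) -> Prop) {FF : Filter F}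
  (n : nat) (f : T -> nat -> R) (g : nat -> R) :
  (forall k, (1 <= k <= n)%nat -> filterlim (fun t => f t k) F (locally (g k))) ->
  filterlim (fun t => norm1 n (f t)) F (locally (norm1 n g)).
Proof.
  induction n as [|n IH]; intros Hf; simpl.
  - apply filterlim_const.
  - apply (filterlim_comp_2 (G := locally (norm1 n g)) (H := locally (Rabs (g (S n)))) _ _ Rplus).
    + apply IH. intros k Hk. apply Hf. lia.
    + apply (filterlim_comp _ _ _ _ Rabs _ (locally (g (S n)))); [apply Hf; lia|].
      apply continuous_Rabs.
    + exact (filterlim_plus (K := R_AbsRing) (norm1 n g) (Rabs (g (S n)))).
Qed.

Lemma is_derive_right_approx (f : R -> R) (c l e : R) :
  is_derive f c l -> 0 < e ->
  at_right 0 (fun h => Rabs (f (c + h) - (f c + h * l)) <= e * h).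
Proof.
  intros Hf He.
  destruct (proj1 (is_derive_Reals f c l) Hf e He) as [d Hd].
  exists d. intros h Hh Hpos. rewrite ball_R, Rminus_0_r in Hh.
  replace (f (c + h) - (f c + h * l)) with (h * ((f (c + h) - f c) / h - l)) by (field; lra).
  rewrite Rabs_mult, (Rabs_pos_eq h), (Rmult_comm e) by lra.
  apply Rmult_le_compat_l; [lra|]. left. apply Hd; lra.
Qed.

Lemma ext_in (b : nat) (v : nat -> R) (k : nat) : (1 <= k <= b)%nat -> ext b v k = v k.
Proof.
  intros [H1 H2]. unfold ext. apply Nat.leb_le in H1, H2. now rewrite H1, H2.
Qed.

Lemma ext_beyond (b : nat) (v : nat -> R) : ext b v (b + 1)%nat = 0.
Proof.
  unfold ext. replace (Nat.leb (b + 1) b) with false by (symmetry; apply Nat.leb_gt; lia).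
  now rewrite Bool.andb_false_r.
Qed.

Lemma sfull_nonneg (b : nat) (v : nat -> R) (j : nat) :
  (forall k, (1 <= k <= b)%nat -> 0 <= v k) -> 0 <= sfull b v j.
Proof.
  intros Hv. unfold sfull, ext.
  destruct (Nat.eqb j 0); [lra|].
  destruct (Nat.leb 1 j) eqn:H1, (Nat.leb j b) eqn:H2; simpl; try lra.
  apply Nat.leb_le in H1, H2. auto.
Qed.

Lemma norm1_variational_dini (b : nat) (lam : R) (sstar X : nat -> R) (y : R -> nat -> R)
  (c e : R) :
  0 <= lam -> (forall k, (1 <= k <= b)%nat -> 0 <= X k + sstar k) ->
  (forall k, (1 <= k <= b)%nat ->
     is_derive (fun u => y u k) c (var_field b lam sstar X (y c) k)) ->
  0 < e -> at_right 0 (fun h => norm1 b (y (c + h)) <= norm1 b (y c) + e * h).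
Proof.
  intros Hlam HX Hy He.
  set (a := fun j => 2 * lam * sfull b (fun j => X j + sstar j) j).
  set (Y := ext b (y c)).
  set (euler := fun h k =>
    Y k + h * (a (k - 1)%nat * Y (k - 1)%nat - a k * Y k - Y k + Y (k + 1)%nat)).
  (* [+ 1] keeps [e'] positive when [b = 0]. *)
  set (e' := e / (INR b + 1)).
  assert (Ha : forall j, 0 <= a j).
  { intros j. unfold a. generalize (sfull_nonneg b _ j HX). nra. }
  assert (Hb : 0 <= INR b) by apply pos_INR.
  assert (He' : 0 < e') by (apply Rdiv_lt_0_compat; lra).
  assert (Hnear : at_right 0 (fun h => 0 < h /\ forall k, (1 <= k <= b)%nat ->
      h * (a k + 1) <= 1 /\ Rabs (y (c + h) k - euler h k) <= e' * h)).
  { apply filter_and.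
    { unfold at_right, within. apply filter_forall. tauto. }
    apply (filter_forall_range _ b (fun k h =>
      h * (a k + 1) <= 1 /\ Rabs (y (c + h) k - euler h k) <= e' * h)).
    intros k Hk. apply filter_and.
    - assert (Hak : 0 < a k + 1) by (generalize (Ha k); lra).
      apply (filter_imp (fun h => 0 < h < 1 / (a k + 1))).
      + intros h [_ Hh]. left. now apply Rlt_div_r.
      + apply at_right_between, Rdiv_lt_0_compat; lra.
    - apply (filter_imp (fun h =>
        Rabs (y (c + h) k - (y c k + h * var_field b lam sstar X (y c) k)) <= e' * h)).
      + intros h Happrox. replace (euler h k) with (y c k + h * var_field b lam sstar X (y c) k);
          [exact Happrox|].
        unfold euler, var_field, Y, a. cbv zeta. rewrite (ext_in b (y c) k Hk). ring.
      + exact (is_derive_right_approx (fun u => y u k) c _ e' (Hy k Hk) He'). }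
  refine (filter_imp _ _ _ Hnear). intros h [Hh Hk].
  assert (Happrox : norm1 b (y (c + h)) <= norm1 b (euler h) + INR b * (e' * h)).
  { apply norm1_le_of_dist_le. intros k Hkb. apply Hk, Hkb. }
  assert (Hstep : norm1 b (euler h) <= norm1 b Y).
  { apply norm1_euler_step_le; [reflexivity|apply ext_beyond|exact Ha|lra|].
    intros k Hkb. apply Hk, Hkb. }
  assert (HY : norm1 b Y = norm1 b (y c)) by (apply norm1_ext_eq; intros; apply ext_in; auto).
  assert (Hbe : INR b * e' <= e).
  { unfold e'. replace (INR b * (e / (INR b + 1))) with (e - e / (INR b + 1)) by (field; lra).
    fold e'. lra. }
  nra.
Qed.

Theorem lemma19
  (N b : nat) (gamma alpha lam : R) (sstar : nat -> R)
  (x x1 : R -> nat -> R)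
  (HN : (1 <= N)%nat) (Hb : (1 <= b)%nat)
  (Hgamma : 0 < gamma <= 1) (Halpha : 0 < alpha)
  (Hlam : lam = 1 - gamma / Rpower (INR N) alpha)
  (* s* is the unique equilibrium of the mean-field model *)
  (Hss : in_state_space b sstar)
  (Heq : is_equilibrium b lam sstar)
  (Huniq : forall s : nat -> R, in_state_space b s -> is_equilibrium b lam s ->
           forall k : nat, (1 <= k <= b)%nat -> s k = sstar k)
  (* x(t) solves the centered mean-field dynamics x' = f(x) for t >= 0 *)
  (Hx_cont0 : forall k : nat, (1 <= k <= b)%nat ->
     filterlim (fun t => x t k) (at_right 0) (locally (x 0 k)))
  (Hx_ode : forall t : R, 0 < t -> forall k : nat, (1 <= k <= b)%nat ->
     is_derive (fun u => x u k) t
       (mf_field b lam (sfull b (fun j => x t j + sstar j)) k))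
  (Hx_nonneg : forall t : R, 0 <= t -> forall k : nat, (1 <= k <= b)%nat ->
     0 <= x t k + sstar k)
  (* x^{(1)} solves the first-order system along x(t) for t >= 0 *)
  (Hx1_cont0 : forall k : nat, (1 <= k <= b)%nat ->
     filterlim (fun t => x1 t k) (at_right 0) (locally (x1 0 k)))
  (Hx1_ode : forall t : R, 0 < t -> forall k : nat, (1 <= k <= b)%nat ->
     is_derive (fun u => x1 u k) t (var_field b lam sstar (x t) (x1 t) k))
  (* x^{(1)}(0) = N (z - y) has exactly one nonzero entry, equal to +-1 *)
  (Hinit : exists (j : nat) (e : R), (1 <= j <= b)%nat /\ (e = 1 \/ e = -1) /\
     forall k : nat, (1 <= k <= b)%nat -> x1 0 k = if Nat.eqb k j then e else 0) :
  forall t : R, 0 <= t -> norm1 b (x1 t) <= norm1 b (x1 0) /\ norm1 b (x1 0) = 1.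
Proof.
  intros t Ht.
  destruct Hinit as [j [e [Hj [He Hx1_0]]]].
  assert (Hlam0 : 0 <= lam) by (rewrite Hlam; now apply one_sub_div_Rpower_nonneg).
  split.
  - apply (dini_le_initial (fun u => norm1 b (x1 u))); [| | |exact Ht].
    + intros c Hc. apply (filterlim_norm1 (locally c)). intros k Hk.
      apply (ex_derive_continuous (fun u => x1 u k)). eexists. now apply Hx1_ode.
    + intros c Hc e' He'. apply (norm1_variational_dini b lam sstar (x c)); auto.
      intros k Hk. apply Hx_nonneg; lra || lia.
    + apply (filterlim_norm1 (at_right 0)), Hx1_cont0.
  - rewrite (norm1_ext_eq b (x1 0) _ Hx1_0), norm1_indicator by lia.
    replace (Nat.leb j b) with true by (symmetry; apply Nat.leb_le; lia).
    destruct He as [-> | ->]; split_Rabs; lra.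
Qed.
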